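(* Let $\mathbb{X},\mathbb{Y}$ be $n$-dimensional real polyhedral Banach spaces with $|\mathrm{Ext}\,B_{\mathbb{X}^*}|=|\mathrm{Ext}\,B_{\mathbb{Y}^*}|$, and let $T\in\mathbb{L}(\mathbb{X},\mathbb{Y})$ be a bijective operator that preserves parallel pairs (equivalently, TEA pairs). Then: (i) for each $f\in\mathrm{Ext}\,B_{\mathbb{X}^*}$ there exists a unique $g\in\mathrm{Ext}\,B_{\mathbb{Y}^*}$ such that $T(\mathrm{Sm}(f))=\mathrm{Sm}(g)$; (ii) for each non-zero $x\in\mathbb{X}$, $|\mathrm{Ext}\,J(x)|=|\mathrm{Ext}\,J(Tx)|$.
   Context: A finite-dimensional Banach space is polyhedral if its unit ball has finitely many extreme points. For non-zero $x$, $J(x)=\{f\in S_{\mathbb{X}^*}: f(x)=\|x\|\}$ and $\mathrm{Ext}\,J(x)$ denotes its set of extreme points. For $f\in\mathrm{Ext}\,B_{\mathbb{X}^*}$, $\mathrm{Sm}(f)=\{x\in\mathbb{X}: J(x)=\{f\}\}$. $(x,y)$ is a parallel pair if $\|x+\lambda y\|=\|x\|+\|y\|$ for some $\lambda$ with $|\lambda|=1$; a TEA pair if $\|x+y\|=\|x\|+\|y\|$. $T$ preserves parallel pairs if $(x,y)$ parallel in $\mathbb{X}$ implies $(Tx,Ty)$ parallel in $\mathbb{Y}$. *)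

(* finite-dimensional real normed spaces modelled as
   ('rV[R]_n, N) with N a norm; dual functionals as row vectors via the
   standard pairing. *)
From HB Require Import structures.
From mathcomp Require Import all_boot all_order all_algebra.
From mathcomp Require Import all_classical all_reals.
Set Implicit Arguments. Unset Strict Implicit. Unset Printing Implicit Defensive.
Import Order.TTheory GRing.Theory Num.Theory.
Local Open Scope classical_set_scope.
Local Open Scope ring_scope.

Section Defs.
Variable R : realType.

Definition pairing n (f x : 'rV[R]_n) : R := \sum_(i < n) f 0 i * x 0 i.

Definition is_norm n (N : 'rV[R]_n -> R) : Prop :=
  [/\ forall x, N x = 0 -> x = 0,
      forall (a : R) x, N (a *: x) = `|a| * N x
    & forall x y, N (x + y) <= N x + N y].

Definition dual_norm n (N : 'rV[R]_n -> R) (f : 'rV[R]_n) : R :=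
  sup [set `|pairing f x| | x in [set x | N x <= 1]].

Definition extreme (V : lmodType R) (C : set V) : set V :=
  [set x | C x /\ forall (y z : V) (t : R), C y -> C z -> 0 < t < 1 ->
             x = t *: y + (1 - t) *: z -> y = z].

Definition unit_ball n (N : 'rV[R]_n -> R) : set 'rV[R]_n := [set x | N x <= 1].
Definition dual_ball n (N : 'rV[R]_n -> R) : set 'rV[R]_n :=
  [set f | dual_norm N f <= 1].
Definition dual_sphere n (N : 'rV[R]_n -> R) : set 'rV[R]_n :=
  [set f | dual_norm N f = 1].

Definition ExtDual n (N : 'rV[R]_n -> R) := extreme (dual_ball N).

Definition Jset n (N : 'rV[R]_n -> R) (x : 'rV[R]_n) : set 'rV[R]_n :=
  [set f | dual_sphere N f /\ pairing f x = N x].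

Definition Sm n (N : 'rV[R]_n -> R) (f : 'rV[R]_n) : set 'rV[R]_n :=
  [set x | Jset N x = [set f]].

Definition polyhedral n (N : 'rV[R]_n -> R) : Prop :=
  finite_set (extreme (unit_ball N)).

Definition parallel n (N : 'rV[R]_n -> R) (x y : 'rV[R]_n) : Prop :=
  exists l : R, `|l| = 1 /\ N (x + l *: y) = N x + N y.

End Defs.

(* Call x smooth for an extreme functional f of the dual ball when f is the
   only extreme functional norming x.  In a polyhedral space Ext B_{X^*} is
   finite, and the smooth points of each f form a nonempty relatively open cone
   Sm(f).  Two points of Sm(f) are parallel, so their images are normed by a
   common extreme functional of Y; perturbing inside Sm(f) towards the
   preimage of a smooth point of Y shows that one g = phi f norms all of
   T(Sm f), and in fact T(Sm f) lies in Sm(phi f).  Pulling smooth points of Y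
   back shows that phi is onto, hence a bijection since both sets of extreme
   functionals have the same finite cardinality, and then T(Sm f) = Sm(phi f).
   Finally Ext J(x) is the set of extreme functionals norming x, and f norms x
   iff phi f norms T x (replace x by x + t s with s smooth and let t -> 0), so
   phi maps Ext J(x) bijectively onto Ext J(T x). *)
From HB Require Import structures.
From mathcomp Require Import all_boot all_order all_algebra.
From mathcomp Require Import all_classical all_reals.
From mathcomp Require Import topology normedtype derive.
From mathcomp Require Import ring lra.
From mathcomp Require finmap.
Import Order.TTheory GRing.Theory Num.Theory.
Import numFieldTopology.Exports numFieldNormedType.Exports.
Local Open Scope classical_set_scope.
Local Open Scope card_scope.
Local Open Scope ring_scope.
Set Implicit Arguments. Unset Strict Implicit. Unset Printing Implicit Defensive.

Section Pairing.
Variables (R : realType) (n : nat).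
Implicit Types (f g x y : 'rV[R]_n).

Lemma pairingDr f x y : pairing f (x + y) = pairing f x + pairing f y.
Proof. by rewrite /pairing -big_split /=; apply: eq_bigr => i _; rewrite mxE mulrDr. Qed.

Lemma pairingZr f (a : R) x : pairing f (a *: x) = a * pairing f x.
Proof. by rewrite /pairing mulr_sumr; apply: eq_bigr => i _; rewrite mxE mulrCA. Qed.

Lemma pairingDl f g x : pairing (f + g) x = pairing f x + pairing g x.
Proof. by rewrite /pairing -big_split /=; apply: eq_bigr => i _; rewrite mxE mulrDl. Qed.

Lemma pairingZl f (a : R) x : pairing (a *: f) x = a * pairing f x.
Proof. by rewrite /pairing mulr_sumr; apply: eq_bigr => i _; rewrite mxE mulrA. Qed.

Lemma pairingNr f x : pairing f (- x) = - pairing f x.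
Proof. by rewrite -scaleN1r pairingZr mulN1r. Qed.

Lemma pairingNl f x : pairing (- f) x = - pairing f x.
Proof. by rewrite -scaleN1r pairingZl mulN1r. Qed.

Lemma pairingBl f g x : pairing (f - g) x = pairing f x - pairing g x.
Proof. by rewrite pairingDl pairingNl. Qed.

Lemma pairing0r f : pairing f 0 = 0.
Proof. by rewrite -(scale0r 0) pairingZr mul0r. Qed.

Lemma pairing0l x : pairing 0 x = 0.
Proof. by rewrite -(scale0r 0) pairingZl mul0r. Qed.

Lemma pairing_sumr f (s : seq 'rV[R]_n) :
  pairing f (\sum_(v <- s) v) = \sum_(v <- s) pairing f v.
Proof.
elim: s => [|a s IH]; first by rewrite !big_nil pairing0r.
by rewrite !big_cons pairingDr IH.
Qed.

Lemma pairing_deltar f (i : 'I_n) : pairing f (delta_mx 0 i) = f 0 i.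
Proof.
rewrite /pairing (bigD1 i) //= mxE !eqxx mulr1 big1 ?addr0 // => k kNi.
by rewrite mxE (negPf kNi) andbF mulr0.
Qed.

Lemma pairing_deltal (i : 'I_n) x : pairing (delta_mx 0 i) x = x 0 i.
Proof.
rewrite /pairing (bigD1 i) //= mxE !eqxx mul1r big1 ?addr0 // => k kNi.
by rewrite mxE (negPf kNi) andbF mul0r.
Qed.

Lemma pairing_combr f (t : R) x y :
  pairing f (t *: x + (1 - t) *: y) = t * pairing f x + (1 - t) * pairing f y.
Proof. by rewrite pairingDr !pairingZr. Qed.

Lemma pairing_combl (t : R) f g x :
  pairing (t *: f + (1 - t) *: g) x = t * pairing f x + (1 - t) * pairing g x.
Proof. by rewrite pairingDl !pairingZl. Qed.

Definition sqdist x y : R := \sum_(i < n) (x 0 i - y 0 i) ^+ 2.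

Lemma sqdist_ge0 x y : 0 <= sqdist x y.
Proof. by apply: sumr_ge0 => i _; rewrite sqr_ge0. Qed.

Lemma sqdist_eq0 x y : sqdist x y = 0 -> x = y.
Proof.
move=> /psumr_eq0P H; apply/rowP => j; apply/eqP; rewrite -subr_eq0 -sqrf_eq0.
by apply/eqP/H => // i _; rewrite sqr_ge0.
Qed.

Lemma sqdistxx x : sqdist x x = 0.
Proof. by rewrite /sqdist big1 // => i _; rewrite subrr expr0n. Qed.

Lemma sqdist_comb (t : R) a b c :
  sqdist (t *: a + (1 - t) *: b) c =
  t * sqdist a c + (1 - t) * sqdist b c - t * (1 - t) * sqdist a b.
Proof.
rewrite /sqdist !mulr_sumr -!big_split -sumrN -big_split /=; apply: eq_bigr => i _.
rewrite !mxE; ring.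
Qed.

End Pairing.

Section Topology.
Variables (R : realType) (n : nat).

Lemma continuous_sum (T : topologicalType) (I : Type) (s : seq I) (F : I -> T -> R) :
  (forall i, continuous (F i)) -> continuous (fun t => \sum_(i <- s) F i t).
Proof.
move=> HF; elim: s => [|a s IH].
  by under eq_fun do rewrite big_nil; exact: cst_continuous.
under eq_fun do rewrite big_cons.
by move=> y; apply: (@continuousD _ _ _ (F a) (fun t => \sum_(i <- s) F i t));
  [exact: HF | exact: IH].
Qed.

Lemma continuous_pairingl (x : 'rV[R]_n) : continuous (fun f : 'rV[R]_n => pairing f x).
Proof.
apply: continuous_sum => i f.
by apply: (@continuousM _ _ (fun f : 'rV[R]_n => f 0 i));
  [exact: coord_continuous | exact: cst_continuous].
Qed.

Lemma continuous_pairingr (f : 'rV[R]_n) : continuous (fun x : 'rV[R]_n => pairing f x).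
Proof.
apply: continuous_sum => i x.
by apply: (@continuousM _ _ (fun=> f 0 i) (fun x : 'rV[R]_n => x 0 i));
  [exact: cst_continuous | exact: coord_continuous].
Qed.

Lemma continuous_sqdist (c : 'rV[R]_n) : continuous (fun y : 'rV[R]_n => sqdist y c).
Proof.
apply: continuous_sum => i z.
have hc : continuous (fun y : 'rV[R]_n => y 0 i - c 0 i).
  by move=> w; apply: (@continuousB _ _ _ (fun y : 'rV[R]_n => y 0 i));
    [exact: coord_continuous | exact: cst_continuous].
under eq_fun do rewrite expr2.
by apply: (@continuousM _ _ (fun y : 'rV[R]_n => y 0 i - c 0 i)); apply: hc.
Qed.

Lemma compact_bounded_closed (A : set 'rV[R]_n) (M : R) :
  closed A -> (forall v, A v -> forall i, `|v 0 i| <= M) -> compact A.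
Proof.
move=> Acl AM.
have Mnco : compact [set v : 'rV[R]_n | forall i, `[(- M), M]%classic (v ord0 i)].
  by apply: (@rV_compact _ _ (fun=> `[(- M), M]%classic)) => _; exact: segment_compact.
apply: subclosed_compact Acl Mnco _ => v /AM vM i /=.
by rewrite in_itv /= -ler_norml; exact: vM.
Qed.

Lemma closed_sublevel (h : 'rV[R]_n -> R) (c : R) :
  continuous h -> closed [set y | h y <= c].
Proof.
by move=> hc; apply: (@preimage_closed _ _ h [set r | r <= c]);
  [move=> y _; exact: hc | exact: closed_le].
Qed.

Lemma closed_level (h : 'rV[R]_n -> R) (c : R) :
  continuous h -> closed [set y | h y = c].
Proof.
by move=> hc; apply: (@preimage_closed _ _ h [set r | r = c]);
  [move=> y _; exact: hc | exact: closed_eq].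
Qed.

End Topology.

Section Extreme.
Variables (R : realType) (n : nat).
Implicit Types (K : set 'rV[R]_n) (phi : 'rV[R]_n -> R).

(* A farthest point from c cannot be a proper convex combination, by strict
   convexity of the squared distance. *)
Lemma farthest_point_extreme K (c : 'rV[R]_n) : compact K -> K !=set0 ->
  exists e, [/\ K e, extreme K e & forall y, K y -> sqdist y c <= sqdist e c].
Proof.
move=> cK K0.
have [e eK He] := EVT_max_rV K0 cK (continuous_subspaceT (@continuous_sqdist _ _ c)).
have Ke : K e by rewrite inE in eK.
have far y : K y -> sqdist y c <= sqdist e c by move=> Ky; apply: He; rewrite inE.
exists e; split => //; split => // a b t Ka Kb /andP[t0 t1] ee.
have := far _ Ka; have := far _ Kb; rewrite ee sqdist_comb.
have tt : 0 < t * (1 - t) by rewrite mulr_gt0 // subr_gt0.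
have D0 := sqdist_ge0 a b.
move=> Hb Ha; have : t * (1 - t) * sqdist a b <= 0 by nra.
rewrite pmulr_rle0 // => D'.
by apply: sqdist_eq0; apply/le_anti; rewrite D' D0.
Qed.

Definition affine_fun phi :=
  forall t a b, phi (t *: a + (1 - t) *: b) = t * phi a + (1 - t) * phi b.

Lemma extreme_face K phi M e :
  affine_fun phi -> (forall y, K y -> phi y <= M) ->
  extreme (K `&` [set y | phi y = M]) e -> extreme K e.
Proof.
move=> lin KM [[Ke pe] He]; split => // a b t Ka Kb t01 ee.
have pa := KM _ Ka; have pb := KM _ Kb.
move: pe => /=; rewrite ee lin => pe; case/andP: t01 => t0 t1.
apply: (He a b t) => //; last by apply/andP.
- by split => //=; apply/le_anti; rewrite pa /=; nra.
- by split => //=; apply/le_anti; rewrite pb /=; nra.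
Qed.

Lemma extreme_maximizer K phi :
  compact K -> K !=set0 -> continuous phi -> affine_fun phi ->
  exists e, extreme K e /\ forall y, K y -> phi y <= phi e.
Proof.
move=> cK K0 pc lin.
have [y0 y0K Hy0] := EVT_max_rV K0 cK (continuous_subspaceT pc).
have Ky0 : K y0 by rewrite inE in y0K.
have KM y : K y -> phi y <= phi y0 by move=> Ky; apply: Hy0; rewrite inE.
have cF : compact (K `&` [set y | phi y = phi y0]).
  by apply: compact_closedI => //; apply: closed_level.
have [e [[Ke pe] He _]] := farthest_point_extreme 0 cF (ex_intro _ y0 (conj Ky0 erefl)).
by exists e; split; [exact: extreme_face lin KM He | rewrite pe].
Qed.

Lemma extreme_subset (A B : set 'rV[R]_n) x :
  A `<=` B -> A x -> extreme B x -> extreme A x.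
Proof. by move=> AB Ax [Bx H]; split => // y z t Ay Az; apply: H; apply: AB. Qed.

End Extreme.

Section Norm.
Variables (R : realType) (n : nat) (N : 'rV[R]_n -> R).
Hypothesis HN : is_norm N.
Implicit Types (f g x y z : 'rV[R]_n).

Lemma isnorm_eq0 x : N x = 0 -> x = 0. Proof. by case: HN => H _ _; apply: H. Qed.
Lemma isnormZ (a : R) x : N (a *: x) = `|a| * N x. Proof. by case: HN => _ H _; apply: H. Qed.
Lemma isnormD x y : N (x + y) <= N x + N y. Proof. by case: HN => _ _ H; apply: H. Qed.
Lemma isnorm0 : N 0 = 0. Proof. by rewrite -(scale0r (0 : 'rV[R]_n)) isnormZ normr0 mul0r. Qed.
Lemma isnormN x : N (- x) = N x. Proof. by rewrite -scaleN1r isnormZ normrN normr1 mul1r. Qed.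

Lemma isnorm_ge0 x : 0 <= N x.
Proof. have := isnormD x (- x); rewrite subrr isnorm0 isnormN; lra. Qed.

Lemma isnorm_gt0 x : x != 0 -> 0 < N x.
Proof.
move=> x0; rewrite lt_neqAle isnorm_ge0 andbT; apply/eqP => /esym /isnorm_eq0.
exact/eqP.
Qed.

Lemma isnorm_sum (I : Type) (s : seq I) (F : I -> 'rV[R]_n) :
  N (\sum_(i <- s) F i) <= \sum_(i <- s) N (F i).
Proof.
elim: s => [|a s IH]; first by rewrite !big_nil isnorm0.
by rewrite !big_cons (le_trans (isnormD _ _)) // lerD2l.
Qed.

Lemma isnorm_lipschitz x y : `|N x - N y| <= N (x - y).
Proof.
rewrite ler_norml; apply/andP; split.
  have := isnormD (y - x) x; rewrite subrK -opprB isnormN; lra.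
have := isnormD (x - y) y; rewrite subrK; lra.
Qed.

Lemma continuous_isnorm : continuous N.
Proof.
move=> z A /(nbhs_ballP (N z)) [e e0 eA].
pose M := \sum_(i < n) N (delta_mx 0 i).
have M0 : 0 <= M by apply: sumr_ge0 => i _; apply: isnorm_ge0.
have M1 : 0 < M + 1 by lra.
apply/nbhs_ballP; exists (e / (M + 1)); first exact: divr_gt0.
move=> y [_ yz]; apply: eA; change (`|N z - N y| < e).
apply: le_lt_trans (isnorm_lipschitz _ _) _.
rewrite {1}(row_sum_delta (z - y)); apply: le_lt_trans (isnorm_sum _ _) _.
apply: (@le_lt_trans _ _ (\sum_(i < n) e / (M + 1) * N (delta_mx 0 i))).
  apply: ler_sum => i _; rewrite isnormZ ler_wpM2r ?isnorm_ge0 //.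
  by rewrite !mxE; apply: ltW; exact: (yz 0 i).
rewrite -mulr_sumr -/M mulrAC ltr_pdivrMr // ltr_pM2l //; lra.
Qed.

Definition dominated f := forall y, pairing f y <= N y.

Lemma dominated_abs f y : dominated f -> `|pairing f y| <= N y.
Proof.
move=> H; rewrite ler_norml (H y) andbT lerNl -pairingNr (le_trans (H _)) //.
by rewrite isnormN.
Qed.

Lemma dominated0 : dominated 0.
Proof. by move=> y; rewrite pairing0l isnorm_ge0. Qed.

Lemma dominatedN f : dominated f -> dominated (- f).
Proof. by move=> H y; rewrite pairingNl -pairingNr (le_trans (H _)) // isnormN. Qed.

End Norm.

Section Dual.
Variables (R : realType) (n : nat) (N : 'rV[R]_n -> R).
Hypothesis HN : is_norm N.
Hypothesis n_gt0 : (0 < n)%N.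
Implicit Types (f g x y : 'rV[R]_n).

Lemma coord_le_l1 y i : `|y 0 i| <= \sum_(j < n) `|y 0 j|.
Proof. by rewrite (bigD1 i) //= lerDl sumr_ge0. Qed.

(* All norms are equivalent: N is bounded below on the compact l1-sphere. *)
Lemma coord_le_norm : exists C, 0 < C /\ forall y i, `|y 0 i| <= C * N y.
Proof.
pose l1 y := \sum_(j < n) `|y 0 j|.
have l1_cont : continuous l1.
  apply: continuous_sum => j y.
  apply: (@continuous_comp _ _ _ (fun y : 'rV[R]_n => y 0 j) (fun r : R => `|r|)).
    exact: coord_continuous.
  exact: norm_continuous.
pose S := [set y | l1 y = 1].
have cS : compact S.
  apply: (@compact_bounded_closed _ _ _ 1); first exact: closed_level.
  by move=> v /= <-; apply: coord_le_l1.
have S0 : S !=set0.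
  exists (delta_mx 0 (Ordinal n_gt0)); rewrite /S /l1 /= (bigD1 (Ordinal n_gt0)) //=.
  rewrite mxE !eqxx normr1 big1 ?addr0 // => k /negPf kN.
  by rewrite mxE kN andbF normr0.
have [m mS Hm] := EVT_min_rV S0 cS (continuous_subspaceT (continuous_isnorm HN)).
have l1m : l1 m = 1 by rewrite inE in mS.
have m0 : m != 0.
  apply: contra_eqN l1m => /eqP ->.
  rewrite /l1 big1 => [|j _]; last by rewrite mxE normr0.
  by rewrite eq_sym oner_neq0.
have Nm := isnorm_gt0 HN m0.
exists (N m)^-1; split => [|y i]; first by rewrite invr_gt0.
have [y0|y0] := eqVneq y 0; first by rewrite y0 mxE normr0 isnorm0 // mulr0.
have l1y : 0 < l1 y.
  rewrite lt_neqAle sumr_ge0 // andbT eq_sym; apply: contra_neq y0 => /psumr_eq0P H.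
  by apply/rowP => j; rewrite mxE; apply/normr0_eq0/H => // k _; rewrite normr_ge0.
have wS : S ((l1 y)^-1 *: y).
  rewrite /S /l1 /= -[X in _ = X](mulVf (lt0r_neq0 l1y)) mulr_sumr.
  by apply: eq_bigr => j _; rewrite mxE normrM gtr0_norm // invr_gt0.
have := Hm _ (mem_set wS); rewrite isnormZ // gtr0_norm ?invr_gt0 // => H.
have H2 : l1 y * N m <= N y.
  by have := ler_wpM2l (ltW l1y) H; rewrite mulrA mulfV ?mul1r // lt0r_neq0.
rewrite mulrC ler_pdivlMr //; apply: le_trans H2.
by apply: ler_wpM2r; [exact: ltW | exact: coord_le_l1].
Qed.

Lemma compact_unit_ball : compact (unit_ball N).
Proof.
have [C [C0 HC]] := coord_le_norm.
apply: (@compact_bounded_closed _ _ _ C); first exact/closed_sublevel/continuous_isnorm.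
by move=> y /= Ny i; apply: le_trans (HC y i) _; rewrite ler_piMr // ltW.
Qed.

Lemma pairing_le_norm f : exists K, forall x, `|pairing f x| <= K * N x.
Proof.
have [C [C0 HC]] := coord_le_norm.
exists (\sum_(i < n) `|f 0 i| * C) => x.
rewrite /pairing mulr_suml; apply: le_trans (ler_norm_sum _ _ _) _.
by apply: ler_sum => i _; rewrite normrM -mulrA ler_wpM2l.
Qed.

Lemma has_sup_pairing f : has_sup [set `|pairing f x| | x in unit_ball N].
Proof.
have [K HK] := pairing_le_norm f.
split; first by exists `|pairing f 0|; exists 0 => //; rewrite /unit_ball /= isnorm0.
exists `|K| => r [x /= Nx <-]; apply: le_trans (HK x) _.
apply: le_trans (ler_wpM2r (isnorm_ge0 HN x) (ler_norm K)) _.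
by rewrite ler_piMr.
Qed.

Lemma pairing_le_dual_norm_ball f x : N x <= 1 -> `|pairing f x| <= dual_norm N f.
Proof. by move=> Nx; apply: sup_upper_bound (has_sup_pairing f) _ _; exists x. Qed.

Lemma pairing_le_dual_norm f y : pairing f y <= dual_norm N f * N y.
Proof.
have [->|y0] := eqVneq y 0; first by rewrite pairing0r isnorm0 // mulr0.
have Ny := isnorm_gt0 HN y0.
have w1 : N ((N y)^-1 *: y) <= 1.
  by rewrite isnormZ // gtr0_norm ?invr_gt0 // mulVf // lt0r_neq0.
have := pairing_le_dual_norm_ball f w1.
rewrite pairingZr normrM gtr0_norm ?invr_gt0 // => H.
have := ler_wpM2r (ltW Ny) H; rewrite mulrAC mulVf ?lt0r_neq0 // mul1r.
exact: le_trans (ler_norm _).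
Qed.

Lemma dominatedP f : dominated N f <-> dual_norm N f <= 1.
Proof.
split => [H|H y].
  apply: ge_sup; first by exists `|pairing f 0|; exists 0 => //=; rewrite isnorm0.
  move=> r [x /= Nx <-]; rewrite ler_norml; apply/andP; split.
    by rewrite lerNl -pairingNr (le_trans (H _)) // isnormN.
  exact: le_trans (H _) Nx.
apply: le_trans (pairing_le_dual_norm f y) _.
by rewrite ler_piMl // isnorm_ge0.
Qed.

Lemma dual_ballE : dual_ball N = [set f | dominated N f].
Proof. by apply/seteqP; split => f /= /dominatedP. Qed.

Lemma JsetE x : x != 0 -> Jset N x = [set f | dominated N f /\ pairing f x = N x].
Proof.
move=> x0; have Nx := isnorm_gt0 HN x0.
apply/seteqP; split => f /= [Hf fx]; split => //.
  by apply/dominatedP; rewrite Hf.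
apply/le_anti; rewrite (proj1 (dominatedP f) Hf) /=.
have w1 : N ((N x)^-1 *: x) <= 1.
  by rewrite isnormZ // gtr0_norm ?invr_gt0 // mulVf // lt0r_neq0.
have := pairing_le_dual_norm_ball f w1.
by rewrite pairingZr fx mulVf ?lt0r_neq0 // normr1.
Qed.

Lemma compact_dominated : compact [set f | dominated N f].
Proof.
apply: (@compact_bounded_closed _ _ _ (\sum_(j < n) N (delta_mx 0 j))).
  have -> : [set f | dominated N f] = \bigcap_(y in setT) [set f | pairing f y <= N y].
    by apply/seteqP; split => [f H y _ | f H y]; [exact: H | exact: (H y I)].
  by apply: closed_bigI => y _; apply/closed_sublevel/continuous_pairingl.
move=> f Hf i; rewrite -pairing_deltar; apply: le_trans (dominated_abs HN _ Hf) _.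
by rewrite (bigD1 i) //= lerDl sumr_ge0 // => j _; apply: isnorm_ge0.
Qed.

End Dual.

Lemma dual_normN (R : realType) n (N : 'rV[R]_n -> R) f :
  dual_norm N (- f) = dual_norm N f.
Proof.
rewrite /dual_norm; congr sup; apply/seteqP.
by split => r [x Hx <-]; exists x => //; rewrite pairingNl normrN.
Qed.

Lemma dual_norm0 (R : realType) n (N : 'rV[R]_n -> R) :
  is_norm N -> dual_norm N 0 = 0.
Proof.
move=> HN; rewrite /dual_norm (_ : [set _ | _ in _] = [set 0]) ?sup1 //.
apply/seteqP; split => r; first by move=> [x _ <-]; rewrite pairing0l normr0.
move=> /= ->; exists 0; last by rewrite pairing0l normr0.
by rewrite /unit_ball /= isnorm0.
Qed.

Section HahnBanach.
Variables (R : realType) (n : nat) (N : 'rV[R]_n -> R).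
Hypothesis HN : is_norm N.
Implicit Types (f x y w : 'rV[R]_n).

Section OneStep.
Variables (W : set 'rV[R]_n) (f e : 'rV[R]_n).
Hypotheses (W0 : W 0) (WD : forall a b, W a -> W b -> W (a + b)).
Hypothesis WZ : forall (a : R) w, W w -> W (a *: w).
Hypothesis fW : forall w, W w -> pairing f w <= N w.

(* The admissible values at e for extending f from W to W + R e. *)
Definition extension_bound (c : R) :=
  forall w, W w -> pairing f w - N (w - e) <= c /\ c <= N (w + e) - pairing f w.

Lemma exists_extension_bound : exists c, extension_bound c.
Proof.
pose A := [set pairing f w - N (w - e) | w in W].
have Aub w2 : W w2 -> ubound A (N (w2 + e) - pairing f w2).
  move=> Ww2 r [w1 Ww1 <-].
  have := fW (WD Ww1 Ww2); rewrite pairingDr.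
  have := isnormD HN (w1 - e) (w2 + e); rewrite addrACA addNr addr0; lra.
have hA : has_sup A.
  split; first by exists (pairing f 0 - N (0 - e)); exists 0.
  by exists (N (0 + e) - pairing f 0); apply: Aub.
exists (sup A) => w Ww; split; first by apply: sup_upper_bound hA _ _; exists w.
by apply: ge_sup; [case: hA | apply: Aub].
Qed.

Lemma extension_dominated c w (t : R) : extension_bound c -> W w ->
  pairing f w + t * c <= N (w + t *: e).
Proof.
move=> Hc Ww.
have [t0|t0|->] := ltgtP t 0; last by rewrite scale0r addr0 mul0r addr0; apply: fW.
- have s0 : 0 < - t by rewrite oppr_gt0.
  have [Hlow _] := Hc _ (WZ (- t)^-1 Ww).
  have Nt : - t * N ((- t)^-1 *: w - e) = N (w + t *: e).
    rewrite -[in LHS](gtr0_norm s0) -isnormZ // (gtr0_norm s0).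
    by rewrite scalerBr scalerA divff ?lt0r_neq0 // scale1r scaleNr opprK.
  have ft : - t * pairing f ((- t)^-1 *: w) = pairing f w.
    by rewrite pairingZr mulrA divff ?lt0r_neq0 // mul1r.
  by have := ler_wpM2l (ltW s0) Hlow; rewrite mulrBr ft Nt; nra.
- have [_ Hup] := Hc _ (WZ t^-1 Ww).
  have Nt : t * N (t^-1 *: w + e) = N (w + t *: e).
    rewrite -[in LHS](gtr0_norm t0) -isnormZ // (gtr0_norm t0).
    by rewrite scalerDr scalerA divff ?lt0r_neq0 // scale1r.
  have ft : t * pairing f (t^-1 *: w) = pairing f w.
    by rewrite pairingZr mulrA divff ?lt0r_neq0 // mul1r.
  by have := ler_wpM2l (ltW t0) Hup; rewrite mulrBr ft Nt; nra.
Qed.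

End OneStep.

Section CoordinateSpans.
Variables (x : 'rV[R]_n) (j : 'I_n).
Hypothesis xj : x 0 j != 0.

(* [coord_span k] is the span of x and of the basis vectors e_i, i < k, i != j. *)
Definition coord_span k y :=
  forall i : 'I_n, (k <= i)%N -> i != j -> y 0 i = y 0 j / x 0 j * x 0 i.

Definition norming_on (W : set 'rV[R]_n) f :=
  (forall y, W y -> pairing f y <= N y) /\ pairing f x = N x.

Lemma coord_span0 k : coord_span k 0.
Proof. by move=> i _ _; rewrite !mxE !mul0r. Qed.

Lemma coord_spanD k y z : coord_span k y -> coord_span k z -> coord_span k (y + z).
Proof. by move=> Hy Hz i ki ij; rewrite !mxE Hy // Hz // !mulrDl. Qed.

Lemma coord_spanZ k (a : R) y : coord_span k y -> coord_span k (a *: y).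
Proof. by move=> Hy i ki ij; rewrite !mxE Hy // !mulrA. Qed.

Lemma coord_span_self k : coord_span k x.
Proof. by move=> i _ _; rewrite mulfV // mul1r. Qed.

Lemma exists_norming_on_line : exists f, norming_on (coord_span 0) f.
Proof.
exists ((N x / x 0 j) *: delta_mx 0 j); split; last first.
  by rewrite pairingZl pairing_deltal mulfVK.
move=> y Hy; have -> : y = (y 0 j / x 0 j) *: x.
  apply/rowP => i; rewrite mxE.
  by have [->|ij] := eqVneq i j; [rewrite mulfVK | exact: Hy].
rewrite pairingZl pairingZr pairing_deltal isnormZ // mulrCA mulfVK //.
by rewrite ler_wpM2r ?isnorm_ge0 ?ler_norm.
Qed.

Lemma extend_norming_coord k : (k < n)%N ->
  (exists f, norming_on (coord_span k) f) -> exists f, norming_on (coord_span k.+1) f.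
Proof.
move=> kn [f [Hf fx]]; pose i0 := Ordinal kn.
have [i0j|i0j] := eqVneq i0 j.
  exists f; split => // y Hy; apply: Hf => i ki ij.
  move: ki; rewrite leq_eqVlt => /orP[/eqP ki|ki]; last exact: Hy.
  have ii0 : i = i0 by apply/val_inj; rewrite /= ki.
  by rewrite ii0 i0j eqxx in ij.
have ji0 : j != i0 by rewrite eq_sym.
pose e : 'rV[R]_n := delta_mx 0 i0.
pose d : 'rV[R]_n := delta_mx 0 i0 - (x 0 i0 / x 0 j) *: delta_mx 0 j.
have dE y : pairing d y = y 0 i0 - x 0 i0 / x 0 j * y 0 j.
  by rewrite pairingBl pairingZl !pairing_deltal.
have dW w : coord_span k w -> pairing d w = 0.
  by move=> Hw; rewrite dE Hw //; ring.
have Wstep y : coord_span k.+1 y -> coord_span k (y - pairing d y *: e).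
  move=> Hy i ki ij; rewrite !mxE (negPf ji0) andbF mulr0 subr0 eqxx /=.
  move: ki; rewrite leq_eqVlt => /orP[/eqP ki|ki].
    have -> : i = i0 by apply/val_inj; rewrite /= ki.
    by rewrite eqxx mulr1 dE; ring.
  have /negPf -> : i != i0 by apply: contraTneq ki => ->; rewrite ltnn.
  by rewrite mulr0 subr0; apply: Hy.
have [c Hc] := exists_extension_bound e (@coord_span0 k) (@coord_spanD k) Hf.
exists (f + (c - pairing f e) *: d); split; last first.
  by rewrite pairingDl pairingZl (dW _ (@coord_span_self k)) mulr0 addr0.
move=> y Hy; have := extension_dominated (@coord_spanZ k) Hf (pairing d y) Hc (Wstep _ Hy).
rewrite subrK pairingDr pairingNr pairingZr pairingDl pairingZl; nra.
Qed.

End CoordinateSpans.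

Lemma exists_dominated_norming x : exists f, dominated N f /\ pairing f x = N x.
Proof.
have [->|x0] := eqVneq x 0.
  by exists 0; split; [apply: dominated0 | rewrite pairing0l isnorm0].
have [j xj] : exists j, x 0 j != 0.
  apply/existsP; apply: contraNT x0 => /existsPn H; apply/eqP/rowP => k.
  by rewrite mxE; apply/eqP; move: (H k); rewrite negbK.
have norming k : (k <= n)%N -> exists f, norming_on x (coord_span x j k) f.
  elim: k => [_|k IH kn]; first exact: exists_norming_on_line.
  by apply: extend_norming_coord => //; apply/IH/ltnW.
have [f [Hf fx]] := norming n (leqnn n).
by exists f; split => // y; apply: Hf => i; rewrite leqNgt ltn_ord.
Qed.

End HahnBanach.

Lemma exists_small_scale (R : realType) (T : eqType) (s : seq T) (P : T -> Prop)
    (a b : T -> R) :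
  (forall v, v \in s -> P v -> 0 < b v) ->
  exists eps : R, 0 < eps /\ forall v, v \in s -> P v -> eps * `|a v| <= b v.
Proof.
elim: s => [|u s IH] H; first by exists 1; split => // v; rewrite in_nil.
have [e [e0 He]] : exists eps : R, 0 < eps /\ forall v, v \in s -> P v -> eps * `|a v| <= b v.
  by apply: IH => v vs Pv; apply: H => //; rewrite in_cons vs orbT.
have [Pu|nPu] := pselect (P u); last first.
  by exists e; split => // v; rewrite in_cons => /orP[/eqP ->|vs] Pv //; exact: He.
have bu : 0 < b u by apply: H => //; rewrite in_cons eqxx.
have au : 0 < `|a u| + 1 by rewrite ltr_wpDl.
pose e' := Num.min e (b u / (`|a u| + 1)).
have e'0 : 0 < e' by rewrite lt_min e0 divr_gt0.
have e'e : e' <= e by rewrite ge_min lexx.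
have e'u : e' <= b u / (`|a u| + 1) by rewrite ge_min lexx orbT.
exists e'; split => // v; rewrite in_cons => /orP[/eqP ->|vs] Pv.
  apply: le_trans (ler_wpM2r (normr_ge0 _) e'u) _.
  rewrite mulrAC ler_pdivrMr //; apply: ler_wpM2l; [exact: ltW | lra].
by apply: le_trans (He _ vs Pv); apply: ler_wpM2r e'e.
Qed.

Section Polyhedral.
Variables (R : realType) (n : nat) (N : 'rV[R]_n -> R).
Hypothesis HN : is_norm N.
Hypothesis n_gt0 : (0 < n)%N.
Implicit Types (f g h x y v : 'rV[R]_n).

Lemma ExtDualE : ExtDual N = extreme [set f | dominated N f].
Proof. by rewrite /ExtDual dual_ballE. Qed.

Lemma ExtDual_dominated g : ExtDual N g -> dominated N g.
Proof. by rewrite ExtDualE => -[]. Qed.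

Lemma exists_ExtDual_norming x : exists g, ExtDual N g /\ pairing g x = N x.
Proof.
have [f0 [df0 f0x]] := exists_dominated_norming HN x.
have [e [eE He]] := extreme_maximizer (compact_dominated HN)
  (ex_intro _ f0 df0) (@continuous_pairingl _ _ x) (fun t a b => pairing_combl t a b x).
exists e; rewrite ExtDualE; split => //.
by apply/le_anti; rewrite (proj1 eE) /= -f0x; exact: He.
Qed.

Lemma ExtDualN g : ExtDual N g -> ExtDual N (- g).
Proof.
rewrite !ExtDualE => -[dg Hg]; split; first exact: dominatedN.
move=> a b t Da Db t01 e; apply: oppr_inj; apply: (Hg (- a) (- b) t) => //.
- exact: dominatedN.
- exact: dominatedN.
- by rewrite -[g]opprK e opprD -!scalerN.
Qed.

Lemma ExtDual_neq0 g : ExtDual N g -> g != 0.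
Proof.
move=> Eg; apply/eqP => g0; move: Eg; rewrite g0 ExtDualE => -[_ H].
pose x := delta_mx 0 (Ordinal n_gt0) : 'rV[R]_n.
have x0 : x != 0.
  by apply/eqP => /rowP /(_ (Ordinal n_gt0)); rewrite !mxE !eqxx /= => /eqP; rewrite oner_eq0.
have [h [Eh hx]] := exists_ExtDual_norming x.
have hN : h = - h.
  apply: (H h (- h) (2^-1)); first exact: ExtDual_dominated.
  - exact/dominatedN/ExtDual_dominated.
  - by apply/andP; split; lra.
  - by apply/rowP => i; rewrite !mxE; field.
have hx' : - pairing h x = N x by rewrite -pairingNl -hN.
by have := isnorm_gt0 HN x0; lra.
Qed.

Lemma extreme_unit_ballN v : extreme (unit_ball N) v -> extreme (unit_ball N) (- v).
Proof.
move=> [Bv Hv]; split; first by rewrite /unit_ball /= isnormN.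
move=> a b t Ba Bb t01 e; apply: oppr_inj; apply: (Hv (- a) (- b) t) => //.
- by rewrite /unit_ball /= isnormN.
- by rewrite /unit_ball /= isnormN.
- by rewrite -[v]opprK e opprD -!scalerN.
Qed.

Lemma dominated_by_vertices h :
  (forall v, extreme (unit_ball N) v -> `|pairing h v| <= 1) -> dominated N h.
Proof.
move=> Hh.
have B0 : unit_ball N !=set0 by exists 0; rewrite /unit_ball /= isnorm0.
have [e [eV He]] := extreme_maximizer (compact_unit_ball HN n_gt0) B0
  (@continuous_pairingr _ _ h) (pairing_combr h).
have he : pairing h e <= 1 by apply: le_trans (ler_norm _) (Hh _ eV).
move=> y; have [->|y0] := eqVneq y 0; first by rewrite pairing0r isnorm0.
have Ny := isnorm_gt0 HN y0.
have w1 : unit_ball N ((N y)^-1 *: y).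
  by rewrite /unit_ball /= isnormZ // gtr0_norm ?invr_gt0 // mulVf // lt0r_neq0.
have := le_trans (He _ w1) he; rewrite pairingZr => H.
by have := ler_wpM2l (ltW Ny) H; rewrite mulrA mulfV ?lt0r_neq0 // mul1r mulr1.
Qed.

Hypothesis HP : polyhedral N.

(* g - f vanishes at every vertex where |f v| = 1, so f +- eps (g - f) stays
   in the dual ball for small eps > 0. *)
Lemma ExtDual_rigid f g : ExtDual N f -> dominated N g ->
  (forall v, extreme (unit_ball N) v -> pairing f v = 1 -> pairing g v = 1) -> g = f.
Proof.
move=> Ef dg Hfg.
have [s sE] := proj1 (finite_seqP _) HP.
have Vs v : extreme (unit_ball N) v -> v \in s by rewrite sE.
have df := ExtDual_dominated Ef.
have fle v : extreme (unit_ball N) v -> `|pairing f v| <= 1.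
  by move=> Vv; apply: le_trans (dominated_abs HN v df) Vv.1.
have hv0 v : extreme (unit_ball N) v -> `|pairing f v| = 1 -> pairing (g - f) v = 0.
  move=> Vv; have [f0|f0] := lerP 0 (pairing f v).
    by rewrite ger0_norm // => fv; rewrite pairingBl fv Hfg // subrr.
  rewrite ltr0_norm // => fv.
  have := Hfg _ (extreme_unit_ballN Vv); rewrite !pairingNr pairingBl; lra.
have [e [e0 He]] := @exists_small_scale _ _ s (fun v => `|pairing f v| < 1)
  (fun v => pairing (g - f) v) (fun v => 1 - `|pairing f v|)
  (fun v _ fv => ltac:(by rewrite subr_gt0)).
have dk (sg : R) : `|sg| = 1 -> dominated N (f + (sg * e) *: (g - f)).
  move=> sg1; apply: dominated_by_vertices => v Vv; rewrite pairingDl pairingZl.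
  have [fv1|fv1] := eqVneq `|pairing f v| 1; first by rewrite hv0 // mulr0 addr0 fv1.
  have fv : `|pairing f v| < 1 by rewrite lt_neqAle fv1 fle.
  apply: le_trans (ler_normD _ _) _; rewrite !normrM sg1 mul1r (gtr0_norm e0).
  by have := He _ (Vs _ Vv) fv; lra.
move: Ef; rewrite ExtDualE => -[_ Hext].
have half : f = 2^-1 *: (f + (1 * e) *: (g - f)) + (1 - 2^-1) *: (f + (-1 * e) *: (g - f)).
  by apply/rowP => i; rewrite !mxE; field.
have t01 : 0 < (2^-1 : R) < 1 by apply/andP; split; lra.
have /rowP eq := Hext _ _ _ (dk 1 (normr1 _)) (dk (-1) (normrN1 _)) t01 half.
apply/rowP => i; have := eq i; rewrite !mxE => Hi.
have : e * (g 0 i - f 0 i) = 0 by lra.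
by move/eqP; rewrite mulf_eq0 (gt_eqF e0) /= subr_eq0 => /eqP.
Qed.

Lemma finite_ExtDual : finite_set (ExtDual N).
Proof.
have [s sE] := proj1 (finite_seqP _) HP.
pose pattern f : {ffun 'I_(size s) -> bool} :=
  [ffun i : 'I_(size s) => pairing f (nth 0 s i) == 1].
have pattern_inj f g : ExtDual N f -> ExtDual N g -> pattern f = pattern g -> g = f.
  move=> Ef Eg pfg; apply: (ExtDual_rigid Ef (ExtDual_dominated Eg)) => v Vv fv.
  have vs : v \in s by have : [set` s] v by rewrite -sE.
  have im : (index v s < size s)%N by rewrite index_mem.
  have := congr1 (fun p : {ffun 'I_(size s) -> bool} => p (Ordinal im)) pfg.
  by rewrite !ffunE /= nth_index // fv eqxx => /esym /eqP.
pose pick b := xget 0 [set g | ExtDual N g /\ pattern g = b].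
apply: (sub_finite_set _ (finite_seq [seq pick b | b <- enum {ffun 'I_(size s) -> bool}])).
move=> f Ef; apply/mapP; exists (pattern f); first by rewrite mem_enum.
have [Ep pp] := xgetI 0 (conj Ef erefl : [set g | ExtDual N g /\ pattern g = pattern f] f).
exact/esym/pattern_inj.
Qed.

(* For extreme f this says x \in Sm(f), see SmE. *)
Definition smooth f x := forall g, ExtDual N g -> (pairing g x = N x <-> g = f).

Lemma exists_smooth f : ExtDual N f -> exists x, smooth f x.
Proof.
move=> Ef; have [s sE] := proj1 (finite_seqP _) HP.
have df := ExtDual_dominated Ef.
pose A := [seq v <- s | pairing f v == 1].
have A_le1 g : dominated N g -> forall v, v \in A -> pairing g v <= 1.
  move=> dg v; rewrite mem_filter => /andP[_ vs].
  have [Bv _] : extreme (unit_ball N) v by rewrite sE.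
  exact: le_trans (dg v) Bv.
exists (\sum_(v <- A) v).
have fx : pairing f (\sum_(v <- A) v) = \sum_(v <- A) 1.
  rewrite pairing_sumr big_seq_cond [RHS]big_seq_cond; apply: eq_bigr => v.
  by rewrite andbT mem_filter => /andP[/eqP].
have Nx : N (\sum_(v <- A) v) = \sum_(v <- A) 1.
  apply/le_anti/andP; split; last by rewrite -fx; apply: df.
  have [g0 [Eg0 <-]] := exists_ExtDual_norming (\sum_(v <- A) v).
  rewrite pairing_sumr big_seq [X in _ <= X]big_seq; apply: ler_sum => v vA.
  exact: A_le1 (ExtDual_dominated Eg0) v vA.
move=> g Eg; split => [gx|->]; last by rewrite fx Nx.
apply: (ExtDual_rigid Ef (ExtDual_dominated Eg)) => v Vv fv.
have vA : v \in A by rewrite mem_filter fv eqxx /=; have : [set` s] v by rewrite -sE.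
have gA w : w \in A -> 0 <= 1 - pairing g w.
  by move=> wA; rewrite subr_ge0; apply: A_le1 (ExtDual_dominated Eg) w wA.
have H : \sum_(w <- A | w \in A) (1 - pairing g w) = 0.
  by rewrite -big_seq sumrB -pairing_sumr gx Nx subrr.
have := @psumr_eq0 _ _ A (fun w => w \in A) (fun w => 1 - pairing g w) gA.
by rewrite H eqxx => /esym /allP /(_ v vA); rewrite vA /= => /eqP; lra.
Qed.

End Polyhedral.

Lemma oppr_eq_self (R : realType) n (f : 'rV[R]_n) : - f = f -> f = 0.
Proof.
move=> /eqP; rewrite -subr_eq0 -opprD oppr_eq0 -mulr2n -scaler_nat scaler_eq0.
by rewrite pnatr_eq0 /= => /eqP.
Qed.

Section Smooth.
Variables (R : realType) (n : nat) (N : 'rV[R]_n -> R).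
Hypothesis HN : is_norm N.
Hypothesis n_gt0 : (0 < n)%N.
Implicit Types (f g h x y z p q : 'rV[R]_n).

Local Notation E := (ExtDual N).
Local Notation smooth := (smooth N).
Let Edom g : E g -> dominated N g := @ExtDual_dominated _ _ _ HN n_gt0 g.

Lemma smooth_norming f x : E f -> smooth f x -> pairing f x = N x.
Proof. by move=> Ef H; apply/(H f Ef). Qed.

Lemma smooth_uniq f g x : E f -> E g -> smooth f x -> smooth g x -> f = g.
Proof. by move=> Ef Eg Hf Hg; symmetry; apply/(Hf g Eg); apply: smooth_norming. Qed.

Lemma smooth_neq0 f x : E f -> smooth f x -> x != 0.
Proof.
move=> Ef H; apply: contraTneq (ExtDual_neq0 HN n_gt0 Ef) => x0.
apply/negPn/eqP/oppr_eq_self/(H _ (ExtDualN HN n_gt0 Ef)).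
by rewrite x0 pairing0r isnorm0.
Qed.

Lemma Sm_neq0 f x : Sm N f x -> x != 0.
Proof.
move=> JE; apply/eqP => x0.
have [dsf _] : Jset N x f by rewrite JE.
have : Jset N x (- f).
  by split; [rewrite /dual_sphere /= dual_normN | rewrite x0 pairing0r isnorm0].
rewrite JE /= => /oppr_eq_self f0.
by move: dsf; rewrite /dual_sphere /= f0 dual_norm0 // => /eqP; rewrite eq_sym oner_eq0.
Qed.

Lemma compact_norming_face x :
  compact ([set f | dominated N f] `&` [set f | pairing f x = N x]).
Proof.
apply: compact_closedI; first exact: compact_dominated.
exact/closed_level/continuous_pairingl.
Qed.

Lemma extreme_norming_face x e :
  extreme ([set f | dominated N f] `&` [set f | pairing f x = N x]) e -> E e /\ pairing e x = N x.
Proof.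
move=> He; split; last by case: He => -[].
rewrite (ExtDualE HN n_gt0); apply: (extreme_face (fun t a b => pairing_combl t a b x) _ He).
by move=> y; apply.
Qed.

Lemma extreme_JsetE x : x != 0 -> extreme (Jset N x) = [set g | E g /\ pairing g x = N x].
Proof.
move=> x0; rewrite (JsetE HN n_gt0 x0); apply/seteqP; split => g.
  exact: extreme_norming_face.
move=> [Eg gx]; apply: (@extreme_subset _ _ _ [set f | dominated N f]).
- by move=> y [].
- by split => //; apply: Edom.
- by rewrite -(ExtDualE HN n_gt0).
Qed.

(* The face of functionals norming a smooth point x is a singleton: its
   farthest point from f is extreme, hence equal to f. *)
Lemma SmE f : E f -> Sm N f = [set x | smooth f x].
Proof.
move=> Ef; apply/seteqP; split => x Hx.
  have x0 := Sm_neq0 Hx.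
  have [_ fx] : Jset N x f by rewrite Hx.
  move=> g Eg; split => [gx|->//].
  have : Jset N x g by rewrite (JsetE HN n_gt0 x0); split => //; apply: Edom.
  by rewrite Hx.
have x0 := smooth_neq0 Ef Hx.
have fD : (Jset N x) f by rewrite (JsetE HN n_gt0 x0); split; [apply: Edom | apply: smooth_norming].
rewrite /Sm /=; apply/seteqP; split => [h|h ->//].
move: fD; rewrite (JsetE HN n_gt0 x0) => fD hD.
have [e [_ eext He]] := farthest_point_extreme f (compact_norming_face (x := x)) (ex_intro _ f fD).
have ef : e = f by apply/(Hx e (extreme_norming_face eext).1)/(extreme_norming_face eext).2.
have := He h hD; rewrite ef sqdistxx => hf.
by apply: sqdist_eq0; apply/le_anti; rewrite hf sqdist_ge0.
Qed.

End Smooth.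

Section SmoothCone.
Variables (R : realType) (n : nat) (N : 'rV[R]_n -> R).
Hypothesis HN : is_norm N.
Hypothesis n_gt0 : (0 < n)%N.
Implicit Types (f g h x y z p q u : 'rV[R]_n).

Local Notation E := (ExtDual N).
Local Notation smooth := (smooth N).
Let Edom g : E g -> dominated N g := @ExtDual_dominated _ _ _ HN n_gt0 g.

Lemma smooth_shift g z y (t : R) : E g -> pairing g z = N z -> smooth g y -> 0 < t ->
  smooth g (z + t *: y).
Proof.
move=> Eg gz Hy t0; have gy := smooth_norming Eg Hy.
have gzy : pairing g (z + t *: y) = N z + t * N y by rewrite pairingDr pairingZr gz gy.
have Nzy : N (z + t *: y) = N z + t * N y.
  apply/le_anti/andP; split; last by rewrite -gzy; apply: Edom.
  by apply: le_trans (isnormD HN _ _) _; rewrite isnormZ // gtr0_norm.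
move=> h Eh; split => [hzy|->]; last by rewrite gzy Nzy.
apply/(Hy h Eh)/le_anti; rewrite (Edom Eh y) /=.
move: hzy; rewrite Nzy pairingDr pairingZr; have := Edom Eh z; nra.
Qed.

Lemma smooth_conic f p q (a b : R) : E f -> smooth f p -> smooth f q -> 0 < a -> 0 < b ->
  smooth f (a *: p + b *: q).
Proof.
move=> Ef Hp Hq a0 b0; apply: smooth_shift => //.
by rewrite pairingZr (isnormZ HN) gtr0_norm // (smooth_norming Ef Hp).
Qed.

Lemma smooth_parallel f p q : E f -> smooth f p -> smooth f q -> parallel N p q.
Proof.
move=> Ef Hp Hq; exists 1; split; first by rewrite normr1.
rewrite scale1r; apply/le_anti; rewrite isnormD //=.
rewrite -(smooth_norming Ef Hp) -(smooth_norming Ef Hq) -pairingDr.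
exact: Edom.
Qed.

Lemma parallel_norming a b : parallel N a b ->
  exists g (l : R), [/\ E g, `|l| = 1, pairing g a = N a & pairing g (l *: b) = N b].
Proof.
move=> [l [l1 Nab]]; have [g [Eg gab]] := exists_ExtDual_norming HN n_gt0 (a + l *: b).
have := Edom Eg a; have := Edom Eg (l *: b); rewrite pairingDr in gab.
rewrite (isnormZ HN) l1 mul1r => gb ga.
by exists g, l; split => //; lra.
Qed.

Hypothesis HP : polyhedral N.

(* Sm(f) is relatively open: since Ext B_{X^*} is finite, f beats every other
   extreme functional at x by a positive margin, which survives a small
   perturbation in any direction u. *)
Lemma smooth_perturb f x u : E f -> smooth f x -> exists t : R, 0 < t /\ smooth f (x + t *: u).
Proof.
move=> Ef Hx; have fx := smooth_norming Ef Hx.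
have [s sE] := proj1 (finite_seqP _) (finite_ExtDual HN n_gt0 HP).
have gap g : E g -> g <> f -> pairing g x < pairing f x.
  move=> Eg gf; rewrite fx lt_neqAle (Edom Eg x) andbT.
  by apply: contra_notN gf => /eqP /(Hx g Eg).
have [e [e0 He]] := @exists_small_scale _ _ s (fun g => g <> f)
  (fun g => pairing g u - pairing f u) (fun g => pairing f x - pairing g x)
  (fun g gs gf => ltac:(by rewrite subr_gt0; apply: gap => //; rewrite sE)).
have t0 : 0 < e / 2 by rewrite divr_gt0.
have beat g : E g -> g <> f -> pairing g (x + e / 2 *: u) < pairing f (x + e / 2 *: u).
  move=> Eg gf; have gs : g \in s by have : [set` s] g by rewrite -sE.
  have := He g gs gf; have := gap g Eg gf; rewrite !pairingDr !pairingZr.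
  have := ler_norm (pairing g u - pairing f u); nra.
exists (e / 2); split => //.
have [g0 [Eg0 g0x]] := exists_ExtDual_norming HN n_gt0 (x + e / 2 *: u).
have fN : pairing f (x + e / 2 *: u) = N (x + e / 2 *: u).
  have [<-//|g0f] := pselect (g0 = f).
  by have := beat g0 Eg0 g0f; have := Edom Ef (x + e / 2 *: u); lra.
move=> g Eg; split => [gx|->//]; apply: contrapT => gf.
by have := beat g Eg gf; rewrite gx -fN ltxx.
Qed.

End SmoothCone.

Lemma le_of_pos_perturb (R : realType) (a b c d : R) :
  (forall t, 0 < t -> c - t * d <= a + t * b) -> c <= a.
Proof.
move=> H; rewrite leNgt; apply/negP => ac.
pose K := `|b| + `|d| + 1.
have K0 : 0 < K by rewrite /K; have := normr_ge0 b; have := normr_ge0 d; lra.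
pose t := (c - a) / (2 * K).
have t0 : 0 < t by rewrite divr_gt0 // ?subr_gt0 // mulr_gt0.
have tK : t * K = (c - a) / 2 by rewrite /t; field; rewrite lt0r_neq0.
have := H t t0; have := ler_wpM2l (ltW t0) (ler_norm b).
have := ler_wpM2l (ltW t0) (ler_norm d); rewrite /K in tK; nra.
Qed.

Section SurjInj.
Import finmap.
Local Open Scope fset_scope.

Lemma surj_card_in_inj (X Y : choiceType) (A : set X) (B : set Y) (phi : X -> Y) :
  finite_set A -> finite_set B -> (A #= B)%card ->
  (forall b, B b -> exists a, A a /\ phi a = b) -> {in A &, injective phi}.
Proof.
move=> fA fB /(fcard_eq fA fB) cAB onto.
pose sA := fset_set A; pose sB := fset_set B.
have sub : fsubset sB [fset phi a | a in sA].
  apply/fsubsetP => b; rewrite in_fset_set // => /set_mem /onto [a [Aa <-]].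
  by apply/imfsetP; exists a => //=; rewrite in_fset_set //; apply: mem_set.
have /card_in_imfsetP inj : #|` [fset phi a | a in sA]| == #|` sA|.
  by rewrite eqn_leq leq_imfset_card /= cAB fsubset_leq_card.
by move=> a1 a2 A1 A2; apply: inj; rewrite in_fset_set //; apply: mem_set; exact: set_mem.
Qed.

End SurjInj.

Section ParallelPreserving.
Variables (R : realType) (n : nat) (NX NY : 'rV[R]_n -> R).
Variables (T : {linear 'rV[R]_n -> 'rV[R]_n}) (Ti : 'rV[R]_n -> 'rV[R]_n).
Hypotheses (HX : is_norm NX) (HY : is_norm NY) (n_gt0 : (0 < n)%N).
Hypotheses (PX : polyhedral NX) (PY : polyhedral NY).
Hypotheses (TK : cancel T Ti) (TiK : cancel Ti T).
Hypothesis Tpar : forall x y, parallel NX x y -> parallel NY (T x) (T y).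
Implicit Types (f g h x y z u p q : 'rV[R]_n).

Local Notation EX := (ExtDual NX).
Local Notation EY := (ExtDual NY).
Local Notation smX := (smooth NX).
Local Notation smY := (smooth NY).

Lemma T_neq0 x : x != 0 -> T x != 0.
Proof.
move=> /eqP x0; apply/eqP => Tx0; apply: x0.
by rewrite -(TK x) Tx0 -{1}(linear0 T) TK.
Qed.

Lemma norm_eq1 (l : R) : `|l| = 1 -> l = 1 \/ l = -1.
Proof.
have [l0|l0] := lerP 0 l; first by rewrite ger0_norm // => ->; left.
by rewrite ltr0_norm // => /eqP; rewrite eqr_oppLR => /eqP ->; right.
Qed.

Lemma parallel_sign f g p q : EX f -> EY g -> smX f p -> smY g (T p) -> smX f q ->
  exists l : R, `|l| = 1 /\ l * pairing g (T q) = NY (T q).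
Proof.
move=> Ef Eg Hp HTp Hq.
have [h [l [Eh l1 hp hq]]] := parallel_norming HY n_gt0 (Tpar (smooth_parallel HX n_gt0 Ef Hp Hq)).
have hg : h = g by apply/(HTp h Eh).
by exists l; split => //; rewrite -pairingZr -hg.
Qed.

(* If g norms T q with the wrong sign, the smooth point NY(T p) q + NY(T q) p
   of Sm(f) is mapped to a vector of norm 0. *)
Lemma smooth_image_norming f g p q : EX f -> EY g -> smX f p -> smY g (T p) ->
  smX f q -> pairing g (T q) = NY (T q).
Proof.
move=> Ef Eg Hp HTp Hq; have [l [l1 Hl]] := parallel_sign Ef Eg Hp HTp Hq.
have [l_1|l_N1] := norm_eq1 l1; first by rewrite l_1 mul1r in Hl.
rewrite l_N1 mulN1r in Hl.
have Tq0 := isnorm_gt0 HY (T_neq0 (smooth_neq0 HX n_gt0 Ef Hq)).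
have Tp0 := isnorm_gt0 HY (T_neq0 (smooth_neq0 HX n_gt0 Ef Hp)).
have Hr := smooth_conic HX n_gt0 Ef Hq Hp Tp0 Tq0.
have Tr0 := isnorm_gt0 HY (T_neq0 (smooth_neq0 HX n_gt0 Ef Hr)).
have [l' [_ Hl']] := parallel_sign Ef Eg Hp HTp Hr.
have gTq : pairing g (T q) = - NY (T q) by rewrite -Hl opprK.
move: Hl'; rewrite linearD !linearZ pairingDr !pairingZr (smooth_norming Eg HTp) gTq.
have -> : NY (T p) * - NY (T q) + NY (T q) * NY (T p) = 0 by ring.
by rewrite mulr0 => Hr0; move: Tr0; rewrite linearD !linearZ -Hr0 ltxx.
Qed.

Lemma exists_smooth_image f : EX f -> exists g, EY g /\ forall x, smX f x -> smY g (T x).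
Proof.
move=> Ef; have [x0 Hx0] := exists_smooth HX n_gt0 PX Ef.
have [g [Eg gT]] := exists_ExtDual_norming HY n_gt0 (T x0).
have [yg Hyg] := exists_smooth HY n_gt0 PY Eg.
have [t [t0 Hp]] := smooth_perturb HX n_gt0 PX (Ti yg) Ef Hx0.
have HTp : smY g (T (x0 + t *: Ti yg)).
  by rewrite linearD linearZ TiK; apply: smooth_shift.
exists g; split => // q Hq h Eh; split => [hq|->]; last exact: smooth_image_norming HTp Hq.
have [yh Hyh] := exists_smooth HY n_gt0 PY Eh.
have [s [s0 Hs]] := smooth_perturb HX n_gt0 PX (Ti yh) Ef Hq.
have HTs : smY h (T (q + s *: Ti yh)) by rewrite linearD linearZ TiK; apply: smooth_shift.
by symmetry; apply/(HTs g Eg)/(smooth_image_norming Ef Eg Hp HTp).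
Qed.

Section ExtremeCorrespondence.
Variable phi : 'rV[R]_n -> 'rV[R]_n.
Hypothesis phiP : forall f, EX f -> EY (phi f) /\ forall x, smX f x -> smY (phi f) (T x).
Hypothesis card_Ext : (EX #= EY)%card.

Lemma phi_of_norming_preimage y g h : EY g -> smY g y -> EX h ->
  pairing h (Ti y) = NX (Ti y) -> phi h = g.
Proof.
move=> Eg Hy Eh hy; have [xh Hxh] := exists_smooth HX n_gt0 PX Eh.
have [t [t0 Ht]] := smooth_perturb HY n_gt0 PY (T xh) Eg Hy.
have := (phiP Eh).2 _ (smooth_shift HX n_gt0 Eh hy Hxh t0).
rewrite linearD linearZ TiK => Hph.
exact: smooth_uniq (phiP Eh).1 Eg Hph Ht.
Qed.

Lemma phi_onto g : EY g -> exists h, EX h /\ phi h = g.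
Proof.
move=> Eg; have [y Hy] := exists_smooth HY n_gt0 PY Eg.
have [h [Eh hy]] := exists_ExtDual_norming HX n_gt0 (Ti y).
by exists h; split => //; apply: phi_of_norming_preimage Hy Eh hy.
Qed.

Lemma phi_inj f h : EX f -> EX h -> phi f = phi h -> f = h.
Proof.
move=> Ef Eh; apply: (surj_card_in_inj (finite_ExtDual HX n_gt0 PX)
  (finite_ExtDual HY n_gt0 PY) card_Ext phi_onto); exact: mem_set.
Qed.

Lemma image_Sm f : EX f -> T @` Sm NX f = Sm NY (phi f).
Proof.
move=> Ef; have [Eg Hg] := phiP Ef.
rewrite (SmE HX n_gt0 Ef) (SmE HY n_gt0 Eg); apply/seteqP; split => y.
  by move=> [x Hx <-]; apply: Hg.
move=> /= Hy; exists (Ti y); last exact: TiK.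
move=> h Eh; split => [hy|->]; first exact/phi_inj/(phi_of_norming_preimage Eg Hy Eh hy).
have [h' [Eh' h'y]] := exists_ExtDual_norming HX n_gt0 (Ti y).
by rewrite (phi_inj Ef Eh' (esym (phi_of_norming_preimage Eg Hy Eh' h'y))).
Qed.

Lemma phi_norming f x : EX f -> pairing f x = NX x -> pairing (phi f) (T x) = NY (T x).
Proof.
move=> Ef fx; have [Eg Hg] := phiP Ef; have [xf Hxf] := exists_smooth HX n_gt0 PX Ef.
apply/le_anti; rewrite (ExtDual_dominated HY n_gt0 Eg) /=.
apply: (@le_of_pos_perturb _ _ (pairing (phi f) (T xf)) _ (NY (T xf))) => t t0.
have := Hg _ (smooth_shift HX n_gt0 Ef fx Hxf t0); rewrite linearD linearZ => H.
rewrite -pairingZr -pairingDr (smooth_norming Eg H).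
have := isnormD HY (T x + t *: T xf) (- (t *: T xf)).
by rewrite addrK isnormN // isnormZ // gtr0_norm //; lra.
Qed.

Lemma norming_phi h x : EX h -> pairing (phi h) (T x) = NY (T x) -> pairing h x = NX x.
Proof.
move=> Eh hx; have [Eg _] := phiP Eh; have [y Hy] := exists_smooth HY n_gt0 PY Eg.
apply/le_anti; rewrite (ExtDual_dominated HX n_gt0 Eh) /=.
apply: (@le_of_pos_perturb _ _ (pairing h (Ti y)) _ (NX (Ti y))) => t t0.
have Hyt := smooth_shift HY n_gt0 Eg hx Hy t0.
have [f [Ef fx]] := exists_ExtDual_norming HX n_gt0 (Ti (T x + t *: y)).
have <- : f = h by apply: phi_inj => //; apply: phi_of_norming_preimage Hyt Ef fx.
have TiE : Ti (T x + t *: y) = x + t *: Ti y by rewrite -{1}(TiK y) -linearZ -linearD TK.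
rewrite -pairingZr -pairingDr -TiE fx TiE.
have := isnormD HX (x + t *: Ti y) (- (t *: Ti y)).
by rewrite addrK isnormN // isnormZ // gtr0_norm //; lra.
Qed.

Lemma card_extreme_Jset x : x != 0 ->
  (extreme (Jset NX x) #= extreme (Jset NY (T x)))%card.
Proof.
move=> x0; rewrite (extreme_JsetE HX n_gt0 x0) (extreme_JsetE HY n_gt0 (T_neq0 x0)).
set AX := [set g | EX g /\ pairing g x = NX x].
have -> : [set g | EY g /\ pairing g (T x) = NY (T x)] = phi @` AX.
  apply/seteqP; split => [g [Eg gx]|g [f [Ef fx] <-]].
    have [h [Eh hg]] := phi_onto Eg.
    by exists h => //; split => //; apply: norming_phi; rewrite // hg.
  by split; [exact: (phiP Ef).1 | exact: phi_norming].
apply: card_esym; apply: inj_card_eq => a b /set_mem [Ea _] /set_mem [Eb _].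
exact: phi_inj.
Qed.

End ExtremeCorrespondence.

End ParallelPreserving.

Section TrivialDimension.
Variables (R : realType) (N : 'rV[R]_0 -> R).
Hypothesis HN : is_norm N.

Lemma ExtDual_dim0 : ExtDual N 0.
Proof.
split; first by rewrite /dual_ball /= dual_norm0 // ler01.
by move=> y z t _ _ _ _; rewrite (thinmx0 y) (thinmx0 z).
Qed.

Lemma Sm_dim0 f : Sm N f = set0.
Proof.
apply/seteqP; split => x // Hx; have [] : Jset N x f by rewrite Hx.
by rewrite /dual_sphere /= (thinmx0 f) dual_norm0 // => /eqP; rewrite eq_sym oner_eq0.
Qed.

End TrivialDimension.

Theorem mainTheorem17 (R : realType) (n : nat) (NX NY : 'rV[R]_n -> R)
    (T : {linear 'rV[R]_n -> 'rV[R]_n}) :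
  is_norm NX -> is_norm NY ->
  polyhedral NX -> polyhedral NY ->
  (ExtDual NX #= ExtDual NY)%card ->
  bijective T ->
  (forall x y, parallel NX x y -> parallel NY (T x) (T y)) ->
  (forall f, ExtDual NX f ->
     exists! g, ExtDual NY g /\ T @` Sm NX f = Sm NY g) /\
  (forall x, x != 0 -> (extreme (Jset NX x) #= extreme (Jset NY (T x)))%card).
Proof.
move=> HX HY PX PY card_Ext [Ti TK TiK] Tpar.
have [n0|n_gt0] := posnP n.
  subst n; split => [f _|x]; last by rewrite (thinmx0 x) eqxx.
  exists 0; split => [|g _]; last by rewrite (thinmx0 g).
  by split; [exact: ExtDual_dim0 | rewrite !Sm_dim0 // image_set0].
have [phi phiP] : {phi : 'rV[R]_n -> 'rV[R]_n & forall f, ExtDual NX f ->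
    ExtDual NY (phi f) /\ forall x, smooth NX f x -> smooth NY (phi f) (T x)}.
  apply: (@choice _ _ (fun f g => ExtDual NX f ->
    ExtDual NY g /\ forall x, smooth NX f x -> smooth NY g (T x))) => f.
  have [Ef|nEf] := pselect (ExtDual NX f); last by exists 0.
  by have [g Hg] := exists_smooth_image HX HY n_gt0 PX PY TK TiK Tpar Ef; exists g.
split => [f Ef|x x0]; last exact: (card_extreme_Jset HX HY n_gt0 PX PY TK TiK phiP).
have [Eg _] := phiP f Ef.
exists (phi f); split => [|g [Eg' SmT]].
  by split; last exact: (image_Sm HX HY n_gt0 PX PY TiK phiP).
have [x Hx] := exists_smooth HX n_gt0 PX Ef.
have : Sm NY g (T x) by rewrite -SmT; exists x => //; rewrite (SmE HX n_gt0 Ef).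
rewrite (SmE HY n_gt0 Eg') => HTx.
exact: smooth_uniq Eg Eg' ((phiP f Ef).2 x Hx) HTx.
Qed.
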